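(* There is a function $C(t,\epsilon)$ such that the following holds for every positive integer $t$ and every $\epsilon\in(0,1)$: let $G$ be a connected balanced bipartite graph with parts $X,Y$ each of order $n$, with $\delta(G)\geq 3C(t,\epsilon)$ and with no induced $S_{t,t}$. Then: (i) writing $U_X(\epsilon)=\{u_1,\dots,u_m\}$, there exist $2m$ distinct vertices $v_1^-,v_1^+,\dots,v_m^-,v_m^+\in Y\setminus U_Y(\epsilon)$ such that $u_iv_i^-$ and $u_iv_i^+$ are edges for all $i$; (ii) writing $U_Y(\epsilon)=\{v_1,\dots,v_m\}$, there exist $2m$ distinct vertices $u_1^-,u_1^+,\dots,u_m^-,u_m^+\in X\setminus U_X(\epsilon)$ such that $v_iu_i^-$ and $v_iu_i^+$ are edges for all $i$.
   Context: For positive integers $a,b$, the biclaw $S_{a,b}$ is the graph with vertex set $\{x,x_1,\dots,x_a,y,y_1,\dots,y_b\}$ and edges $xy$, $xy_1,\dots,xy_b$, $yx_1,\dots,yx_a$; ''no induced $S_{t,t}$'' means no induced subgraph isomorphic to $S_{t,t}$. For a bipartite graph with parts $X,Y$, $\Delta_X=\max_{x\in X} d(x)$, $\Delta_Y=\max_{y\in Y}d(y)$, $U_X(\epsilon)=\{x\in X: d(x)\leq (1-\epsilon)\Delta_X\}$ and $U_Y(\epsilon)=\{y\in Y: d(y)\leq(1-\epsilon)\Delta_Y\}$. $\delta(G)$ is the minimum degree. *)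

From HB Require Import structures.
From mathcomp Require Import all_boot all_order all_algebra.
From mathcomp Require Import reals.
Set Implicit Arguments. Unset Strict Implicit. Unset Printing Implicit Defensive.
Import Order.TTheory GRing.Theory Num.Theory.

Definition deg (T : finType) (e : rel T) (v : T) : nat := #|[set w | e v w]|.

Definition maxdeg (T : finType) (e : rel T) (A : {set T}) : nat :=
  \max_(v in A) deg e v.

Definition Uset (R : realType) (T : finType) (e : rel T) (A : {set T}) (eps : R)
  : {set T} :=
  [set v in A | ((deg e v)%:R <= (1 - eps) * (maxdeg e A)%:R)%R].

(* Vertex type of the biclaw S_{a,b}:
   inl true = x, inl false = y, inr (inl i) = x_i, inr (inr j) = y_j. *)
Definition biclaw_vert (a b : nat) : finType := (bool + ('I_a + 'I_b))%type.

Definition biclaw_edge (a b : nat) (u v : biclaw_vert a b) : bool :=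
  match u, v with
  | inl true, inl false | inl false, inl true => true
  | inl true, inr (inr _) | inr (inr _), inl true => true
  | inl false, inr (inl _) | inr (inl _), inl false => true
  | _, _ => false
  end.

Definition has_induced_biclaw (T : finType) (e : rel T) (a b : nat) : Prop :=
  exists f : biclaw_vert a b -> T,
    injective f /\ forall u v, e (f u) (f v) = biclaw_edge u v.

(* Let K = t (2q)^t, where q >= 8 and q eps >= 2.  The basic estimate is a greedy
   argument: if x ~ y and at least K neighbours a of y each miss a 1/q-fraction of N(x),
   one can choose t vertices of N(x) - y and t of these a with no edges between them,
   and together with x and y they induce S_{t,t}.
   Fix x* in X of maximum degree Delta and call core the vertices of X sharing at least
   (1 - 1/q) Delta neighbours with x*.  Applying the estimate around x* and double counting
   common neighbourhoods shows that no vertex of X is adjacent both to a vertex of Y with a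
   core neighbour and to one without; by connectivity every y in Y has a core neighbour p.
   As deg p >= (1 - 1/q) Delta while the vertices of U_X(eps) have degree at most
   (1 - eps) Delta, each of them misses a 1/q-fraction of N(p), so y has fewer than K
   neighbours in U_X(eps).  The same holds with X and Y exchanged, and since the minimum
   degree exceeds 3K, Hall's theorem for two copies of U_X(eps) gives the required
   2m distinct neighbours. *)

From HB Require Import structures.
From mathcomp Require Import all_boot all_order all_algebra.
From mathcomp Require Import reals.
From mathcomp Require Import zify ring.
Import Order.TTheory GRing.Theory Num.Theory.
Set Implicit Arguments. Unset Strict Implicit. Unset Printing Implicit Defensive.

Section Hall.
Variables (A B : finType) (b0 : B).
Implicit Types (r : A -> B -> bool) (L S : {set A}) (N : {set B}).

Definition rnbhd (r : A -> B -> bool) (S : {set A}) : {set B} :=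
  [set b | [exists a in S, r a b]].

Definition hall_condition r (L : {set A}) :=
  forall S : {set A}, S \subset L -> #|S| <= #|rnbhd r S|.

Definition matching r (L : {set A}) (f : A -> B) :=
  {in L, forall a, r a (f a)} /\ {in L &, injective f}.

Definition avoid (r : A -> B -> bool) (N : {set B}) a b := r a b && (b \notin N).

Lemma rnbhdU r S1 S2 : rnbhd r (S1 :|: S2) = rnbhd r S1 :|: rnbhd r S2.
Proof.
apply/setP => b; rewrite !inE; apply/existsP/orP => [[a]|].
  by rewrite inE => /andP[/orP[] aS rab]; [left|right];
     apply/existsP; exists a; rewrite aS.
by case=> /existsP[a /andP[aS rab]]; exists a; rewrite inE aS ?orbT.
Qed.

Lemma rnbhd_avoid r N S : rnbhd r S \subset rnbhd (avoid r N) S :|: N.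
Proof.
apply/subsetP => b; rewrite !inE => /existsP[a /andP[aS rab]].
case: (boolP (b \in N)) => bN; rewrite ?orbT // orbF.
by apply/existsP; exists a; rewrite aS /avoid rab bN.
Qed.

Lemma hall_condition_avoid_tight r L S :
  hall_condition r L -> S \subset L -> #|rnbhd r S| <= #|S| ->
  hall_condition (avoid r (rnbhd r S)) (L :\: S).
Proof.
move=> hL SL tight S' S'LS.
have S'S0 : S' :&: S = set0.
  by apply/setP => a; rewrite !inE; apply/andP => -[/(subsetP S'LS)]; rewrite inE => /andP[/negP].
have S'SL : S' :|: S \subset L by rewrite subUset SL (subset_trans S'LS) ?subsetDl.
have := hL _ S'SL; rewrite cardsU S'S0 cards0 subn0 rnbhdU.
have := subset_leq_card (setSU (rnbhd r S) (rnbhd_avoid r (rnbhd r S) S')).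
rewrite -setUA setUid.
have [+ _] := leq_card_setU (rnbhd (avoid r (rnbhd r S)) S') (rnbhd r S).
lia.
Qed.

Lemma hall_condition_avoid_point r L a0 b1 :
  (forall S, S \proper L -> S != set0 -> #|S| < #|rnbhd r S|) -> a0 \in L ->
  hall_condition (avoid r [set b1]) (L :\ a0).
Proof.
move=> strict a0L S SL; have [->|S0] := eqVneq S set0; first by rewrite cards0.
have := strict S (sub_proper_trans SL (properD1 a0L)) S0.
have := subset_leq_card (rnbhd_avoid r [set b1] S).
have [+ _] := leq_card_setU (rnbhd (avoid r [set b1]) S) [set b1].
rewrite cards1; lia.
Qed.

Lemma matching_union r N S L f1 f2 :
  matching r S f1 -> {in S, forall a, f1 a \in N} ->
  matching (avoid r N) (L :\: S) f2 ->
  matching r L (fun a => if a \in S then f1 a else f2 a).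
Proof.
move=> [rf1 f1inj] f1N [rf2 f2inj].
have rf2N a : a \in L -> a \notin S -> r a (f2 a) && (f2 a \notin N).
  by move=> aL aS; apply: rf2; rewrite inE aS.
have f2N a : a \in L -> a \notin S -> f2 a \notin N.
  by move=> aL /(rf2N a aL)/andP[].
split=> [a aL | a a' aL a'L].
  by case: ifP => aS; [apply: rf1 | case/andP: (rf2N a aL (negbT aS))].
case: ifP => aS; case: ifP => a'S.
- exact: f1inj.
- by move=> eqf; move: (f2N a' a'L (negbT a'S)); rewrite -eqf f1N.
- by move=> eqf; move: (f2N a aL (negbT aS)); rewrite eqf f1N.
- by apply: f2inj; rewrite inE ?aS ?a'S.
Qed.

Lemma hall_matching r L : hall_condition r L -> exists f, matching r L f.
Proof.
have [n] := ubnP #|L|; elim: n r L => // n IH r L /ltnSE cardL hL.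
pose tight S := [&& S \proper L, S != set0 & #|rnbhd r S| <= #|S|].
have [S /and3P[SpL S0 tightS] | strict] := pickP tight.
  have SL := proper_sub SpL.
  have [f1 m1] := IH r S (leq_trans (proper_card SpL) cardL)
    (fun S' S'S => hL S' (subset_trans S'S SL)).
  have [|f2 m2] := IH (avoid r (rnbhd r S)) (L :\: S) _
    (hall_condition_avoid_tight hL SL tightS).
    rewrite cardsD (setIidPr SL); have := subset_leq_card SL; have := card_gt0 S.
    by rewrite S0; lia.
  exists (fun a => if a \in S then f1 a else f2 a); apply: (matching_union m1 _ m2).
  by move=> a aS; rewrite inE; apply/existsP; exists a; rewrite aS m1.1.
have [L0|[a0 a0L]] := set_0Vmem L.
  by exists (fun=> b0); split=> a; rewrite L0 inE.
have [b1 ra0b1] : exists b1, r a0 b1.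
  have := hL [set a0]; rewrite sub1set a0L => /(_ isT); rewrite cards1 card_gt0 => /set0Pn[b1].
  by rewrite inE => /existsP[a]; rewrite inE => /andP[/eqP-> ?]; exists b1.
have strictL S : S \proper L -> S != set0 -> #|S| < #|rnbhd r S|.
  by move=> SpL S0; have := strict S; rewrite /tight SpL S0 /= ltnNge => ->.
have [|f2 m2] := IH (avoid r [set b1]) (L :\ a0) _
  (hall_condition_avoid_point b1 strictL a0L).
  by move: (cardsD1 a0 L) cardL; rewrite a0L; lia.
exists (fun a => if a \in [set a0] then b1 else f2 a); apply: matching_union m2.
- by split=> [a|a a']; rewrite !inE => /eqP-> // /eqP->.
- by move=> a _; rewrite inE.
Qed.

End Hall.

Lemma double_count (I J : finType) (r : I -> J -> bool) (A : {set I}) (B : {set J}) :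
  \sum_(a in A) #|[set b in B | r a b]| = \sum_(b in B) #|[set a in A | r a b]|.
Proof.
have card_sum (T : finType) (C : {set T}) (p : pred T) :
    #|[set c in C | p c]| = \sum_(c in C) p c.
  rewrite -sum1_card big_mkcond [RHS]big_mkcond /=.
  by apply: eq_bigr => c _; rewrite !inE; case: (c \in C); case: (p c).
under eq_bigr do rewrite card_sum.
under [RHS]eq_bigr do rewrite card_sum.
exact: exchange_big.
Qed.

Lemma exists_popular (I J : finType) (r : I -> J -> bool) (A : {set I}) (B : {set J}) c d :
  0 < #|B| -> #|B| <= d -> {in A, forall a, d <= c * #|[set b in B | r a b]|} ->
  exists2 b, b \in B & #|A| <= c * #|[set a in A | r a b]|.
Proof.
move=> B0 Bd hA; pose m b := #|[set a in A | r a b]|.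
have [b bB bmax] := eq_bigmax_cond m B0; exists b => //.
have : #|A| * d <= c * (d * m b).
  rewrite -sum_nat_const.
  apply: (@leq_trans (\sum_(a in A) c * #|[set b in B | r a b]|)); first exact: leq_sum.
  rewrite -big_distrr /= leq_mul2l double_count -bmax; apply/orP; right.
  apply: (@leq_trans (#|B| * \max_(b' in B) m b')); last by rewrite leq_mul2r Bd orbT.
  by rewrite -sum_nat_const; apply: leq_sum => b' b'B; apply: leq_bigmax_cond.
rewrite mulnCA mulnC leq_pmul2l //; exact: leq_trans B0 Bd.
Qed.

Lemma card_setI_le_setD (T : finType) (A B C : {set T}) :
  #|A :&: B| <= #|C :&: B| + #|A :\: C|.
Proof.
apply: leq_trans (leq_card_setU _ _); apply/subset_leq_card/subsetP => w.
by rewrite !inE => /andP[-> ->]; case: (w \in C).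
Qed.

Lemma weighted_count_contra q k g d :
  8 <= q -> 0 < k -> 4 * (q * k) <= d -> 31 * k <= g ->
  g * ((q - 1) * d) <= q * (k * g + k * d) -> False.
Proof.
move=> q8 k0 dk gk count.
have d0 : 0 < d by move: q8 k0 dk; nia.
have : d * (4 * g * (q - 1)) <= d * (g + 4 * (q * k)).
  have : 4 * (q * k * g) <= d * g by rewrite mulnA leq_mul2r dk orbT.
  by move: count; nia.
by rewrite leq_pmul2l //; nia.
Qed.

Lemma scaled_low_deg (R : realType) (eps : R) q Delta d :
  (2%:R <= q%:R * eps)%R -> (d%:R <= (1 - eps) * Delta%:R)%R ->
  q * d + 2 * Delta <= q * Delta.
Proof.
move=> q_eps d_low; rewrite -(ler_nat R) natrD !natrM.
have -> : (q%:R * Delta%:R = q%:R * ((1 - eps) * Delta%:R) + q%:R * eps * Delta%:R :> R)%R.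
  by ring.
by apply: lerD; [rewrite ler_wpM2l | rewrite ler_wpM2r].
Qed.

Definition degree_bound t q := 4 * q * (t * (2 * q) ^ t) + 4 * t * q + 8.

Section Graph.
Variables (T : finType) (e : rel T).
Hypothesis e_sym : symmetric e.
Implicit Types (A B S U H X : {set T}).

Definition nbhd v : {set T} := [set w | e v w].

Lemma in_nbhd v w : (w \in nbhd v) = e v w.
Proof. by rewrite inE. Qed.

Lemma deg_nbhd v : deg e v = #|nbhd v|.
Proof. by []. Qed.

Lemma double_count_nbhd A B :
  \sum_(a in A) #|nbhd a :&: B| = \sum_(b in B) #|nbhd b :&: A|.
Proof.
have nbhdI v C : nbhd v :&: C = [set w in C | e v w].
  by apply/setP => w; rewrite !inE andbC.
under eq_bigr do rewrite nbhdI.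
under [RHS]eq_bigr do rewrite nbhdI.
rewrite double_count; apply: eq_bigr => b _.
by apply: eq_card => a; rewrite !inE e_sym.
Qed.

(* The pair [(u, b)] stands for the [b]-th copy of [u]. *)
Lemma hall_condition_doubled U H M :
  0 < M -> {in U, forall u, 2 * M <= #|nbhd u :&: H|} ->
  {in H, forall y, #|nbhd y :&: U| <= M} ->
  hall_condition (fun (p : T * bool) y => e p.1 y && (y \in H)) [set p | p.1 \in U].
Proof.
move=> M0 hU hH S SL; set N := rnbhd _ S.
pose S1 := [set p.1 | p in S].
have S1U : S1 \subset U.
  by apply/subsetP => _ /imsetP[p pS ->]; move: (subsetP SL p pS); rewrite inE.
have cardS : #|S| <= #|S1| * 2.
  have /subset_leq_card : S \subset setX S1 [set: bool].
    by apply/subsetP => p pS; rewrite !inE andbT; apply/imsetP; exists p.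
  by rewrite cardsX cardsT card_bool.
have lower : #|S1| * (2 * M) <= \sum_(u in S1) #|nbhd u :&: N|.
  rewrite -sum_nat_const; apply: leq_sum => _ /imsetP[p pS ->].
  have pU : p.1 \in U by move: (subsetP SL p pS); rewrite inE.
  apply: leq_trans (hU _ pU) _; apply/subset_leq_card/subsetP => y.
  rewrite !inE => /andP[py yH].
  by rewrite py; apply/existsP; exists p; rewrite pS py yH.
have upper : \sum_(y in N) #|nbhd y :&: S1| <= #|N| * M.
  rewrite -sum_nat_const; apply: leq_sum => y.
  rewrite inE => /existsP[p /andP[_ /andP[_ yH]]].
  exact/(leq_trans _ (hH y yH))/subset_leq_card/setIS.
rewrite double_count_nbhd in lower.
have := leq_trans lower upper; rewrite mulnA leq_pmul2r // => S1N.
exact: leq_trans cardS S1N.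
Qed.

Definition private_nbr_pairs U H := exists fm fp : T -> T,
  (forall u, u \in U -> [/\ fm u \in H, fp u \in H, e u (fm u) & e u (fp u)]) /\
  {in U &, injective fm} /\ {in U &, injective fp} /\
  (forall u u', u \in U -> u' \in U -> fm u != fp u').

Lemma double_matching U H M (z0 : T) :
  0 < M -> {in U, forall u, 2 * M <= #|nbhd u :&: H|} ->
  {in H, forall y, #|nbhd y :&: U| <= M} -> private_nbr_pairs U H.
Proof.
move=> M0 hU hH.
have [f [rf finj]] := hall_matching z0 (hall_condition_doubled M0 hU hH).
have inL u b : u \in U -> (u, b) \in [set p : T * bool | p.1 \in U] by rewrite inE.
exists (fun u => f (u, false)), (fun u => f (u, true)); split; last split; last split.
- move=> u uU; case/andP: (rf _ (inL u false uU)) => ? ?.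
  by case/andP: (rf _ (inL u true uU)).
- by move=> u u' uU u'U /(finj _ _ (inL _ _ uU) (inL _ _ u'U)) [].
- by move=> u u' uU u'U /(finj _ _ (inL _ _ uU) (inL _ _ u'U)) [].
- by move=> u u' uU u'U; apply/eqP => /(finj _ _ (inL _ _ uU) (inL _ _ u'U)).
Qed.

Section Bipartite.
Variable X : {set T}.
Hypothesis e_bip : forall u v, e u v -> (u \in X) != (v \in X).

Lemma bip_side a b : e a b -> (b \in X) = (a \notin X).
Proof. by move/e_bip; case: (a \in X); case: (b \in X). Qed.

Lemma bip_irr v : e v v = false.
Proof. by apply/negbTE/negP => /e_bip; rewrite eqxx. Qed.

Lemma nonadj_of_common_nbr a b c : e a c -> e b c -> e a b = false.
Proof.
move=> ac bc; apply/negbTE/negP => ab.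
by move: (e_bip ac) (e_bip bc) (e_bip ab); case: (a \in X); case: (b \in X); case: (c \in X).
Qed.

Definition misses q x a := deg e x <= q * #|nbhd x :\: nbhd a|.

Lemma biclaw_greedy t q x y S :
  0 < q -> 2 * t * q < deg e x -> S \subset nbhd y -> {in S, forall a, misses q x a} ->
  forall k, k <= t -> exists W : seq T, exists Sk : {set T},
    [/\ uniq W /\ size W = k, {subset W <= nbhd x :\ y}, Sk \subset S,
        forall a w, a \in Sk -> w \in W -> ~~ e a w
      & #|S| <= #|Sk| * (2 * q) ^ k].
Proof.
move=> q0 degx Sy Smiss; elim=> [|k IH] kt; first by exists [::], S; rewrite muln1.
have [W [Sk [[uW sW] Wx SkS nonadj cardS]]] := IH (ltnW kt).
have cardW : #|[set w in W]| = k by rewrite cardsE (card_uniqP uW).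
pose B' := (nbhd x :\ y) :\: [set w in W].
have B'x : #|B'| <= deg e x.
  by apply/subset_leq_card/subsetP => w; rewrite !inE => /and3P[].
have xB' : deg e x <= #|B'| + k.+1.
  rewrite /B' cardsD deg_nbhd (cardsD1 y (nbhd x)).
  have := subset_leq_card (subsetIr (nbhd x :\ y) [set w in W]).
  by case: (y \in nbhd x); lia.
have spread a : a \in Sk -> deg e x <= 2 * q * #|[set w in B' | ~~ e a w]|.
  (* [a] misses at least [deg x / q] vertices of [N(x)], at most [k] of them in [W] and not
     [y], while [2 q k < deg x]. *)
  move=> aSk; have ay : e a y by rewrite e_sym -in_nbhd (subsetP Sy) ?(subsetP SkS).
  have : nbhd x :\: nbhd a \subset [set w in B' | ~~ e a w] :|: [set w in W].
    apply/subsetP => w; rewrite !inE => /andP[aw xw]; rewrite aw xw !andbT /=.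
    by case: (w \in W); rewrite ?orbT // orbF; apply: contraNneq aw => ->.
  move/subset_leq_card; have [+ _] := leq_card_setU [set w in B' | ~~ e a w] [set w in W].
  have := Smiss a (subsetP SkS a aSk); rewrite /misses cardW.
  by move: degx kt; nia.
have B'0 : 0 < #|B'| by move: degx kt xB'; nia.
have [w wB' cardSk] := exists_popular B'0 B'x spread.
move: wB'; rewrite in_setD => /andP[+ wx]; rewrite inE => wW.
exists (w :: W), [set a in Sk | ~~ e a w]; split.
- by rewrite /= wW uW sW.
- by move=> z; rewrite inE => /predU1P[->|/Wx].
- by apply/subsetP => a; rewrite inE => /andP[/(subsetP SkS)].
- by move=> a z; rewrite !inE => /andP[aSk aw] /predU1P[->|/(nonadj a z aSk)].
- rewrite expnS mulnA (mulnC _ (2 * q)); apply: leq_trans cardS _.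
  by rewrite leq_mul2r cardSk orbT.
Qed.

Lemma induced_biclaw_of_maps t x y (s w : 'I_t -> T) :
  e x y -> injective s -> injective w ->
  (forall i, s i \in nbhd y :\ x) -> (forall j, w j \in nbhd x :\ y) ->
  (forall i j, ~~ e (s i) (w j)) -> has_induced_biclaw e t t.
Proof.
move=> xy s_inj w_inj sS wW nonadj.
have sx i : s i != x by have := sS i; rewrite !inE => /andP[].
have ys i : e y (s i) by have := sS i; rewrite !inE => /andP[].
have wy j : w j != y by have := wW j; rewrite !inE => /andP[].
have xw j : e x (w j) by have := wW j; rewrite !inE => /andP[].
have yx : e y x by rewrite e_sym.
have sy i : e (s i) y by rewrite e_sym.
have wx j : e (w j) x by rewrite e_sym.
have xs i := nonadj_of_common_nbr xy (sy i).
have sx' i := nonadj_of_common_nbr (sy i) xy.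
have yw j := nonadj_of_common_nbr yx (wx j).
have wy' j := nonadj_of_common_nbr (wx j) yx.
have ss i i' := nonadj_of_common_nbr (sy i) (sy i').
have ww j j' := nonadj_of_common_nbr (wx j) (wx j').
have sw i j : e (s i) (w j) = false by apply/negbTE/nonadj.
have ws i j : e (w j) (s i) = false by rewrite e_sym sw.
pose f (v : biclaw_vert t t) : T :=
  match v with
  | inl true => x | inl false => y | inr (inl i) => s i | inr (inr j) => w j
  end.
exists f; split; last first.
  by move=> [[]|[i|j]] [[]|[i'|j']]; rewrite /= ?bip_irr ?xy ?yx ?xs ?sx' ?ys ?sy
       ?yw ?wy' ?xw ?wx ?ss ?ww ?sw ?ws.
move=> [[]|[i|j]] [[]|[i'|j']] //= fuv.
all: try by rewrite (s_inj _ _ fuv).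
all: try by rewrite (w_inj _ _ fuv).
all: exfalso; move: fuv => eq.
- by move: xy; rewrite eq bip_irr.
- by move: (sx i'); rewrite eq eqxx.
- by move: (xw j'); rewrite -eq bip_irr.
- by move: xy; rewrite eq bip_irr.
- by move: (ys i'); rewrite -eq bip_irr.
- by move: (wy j'); rewrite eq eqxx.
- by move: (sx i); rewrite eq eqxx.
- by move: (ys i); rewrite eq bip_irr.
- by move: (sy i); rewrite eq wy'.
- by move: (xw j); rewrite eq bip_irr.
- by move: (wy j); rewrite eq eqxx.
- by move: (sy i'); rewrite -eq wy'.
Qed.

Lemma induced_biclaw_of t x y (W : seq T) S :
  e x y -> uniq W -> size W = t -> {subset W <= nbhd x :\ y} ->
  t <= #|S| -> S \subset nbhd y :\ x -> (forall a w, a \in S -> w \in W -> ~~ e a w) ->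
  has_induced_biclaw e t t.
Proof.
move=> xy uW sW Wx tS Sy nonadj; have tS' : t <= size (enum S) by rewrite -cardE.
pose s (i : 'I_t) := nth x (enum S) i; pose w (j : 'I_t) := nth x W j.
have sS i : s i \in S by rewrite -mem_enum mem_nth // (leq_trans _ tS').
have wW j : w j \in W by rewrite mem_nth // sW.
apply: (@induced_biclaw_of_maps t x y s w xy) => [i i'|j j'|i|j|i j].
- by move/eqP; rewrite nth_uniq ?enum_uniq ?(leq_trans _ tS') // => /eqP/val_inj.
- by move/eqP; rewrite nth_uniq ?sW // => /eqP/val_inj.
- exact: (subsetP Sy).
- exact: Wx.
- exact: nonadj.
Qed.

Lemma card_missing_lt t q x y S :
  0 < q -> ~ has_induced_biclaw e t t -> e x y -> S \subset nbhd y :\ x ->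
  2 * t * q < deg e x -> {in S, forall a, misses q x a} -> #|S| < t * (2 * q) ^ t.
Proof.
move=> q0 nob xy Sy degx Smiss; rewrite ltnNge; apply/negP => tS.
have Sy' : S \subset nbhd y by apply: subset_trans Sy (subsetDl _ _).
have [W [St [[uW sW] Wx StS nonadj cardS]]] :=
  biclaw_greedy q0 degx Sy' Smiss (leqnn t).
apply: nob; apply: (induced_biclaw_of xy uW sW Wx _ (subset_trans StS Sy) nonadj).
have pos : 0 < (2 * q) ^ t by rewrite expn_gt0 muln_gt0 q0.
by rewrite -(leq_pmul2r pos) (leq_trans tS cardS).
Qed.

Section Core.
Variables (t q D : nat).
Hypotheses (t_gt0 : 0 < t) (q_ge8 : 8 <= q).
Hypothesis no_biclaw : ~ has_induced_biclaw e t t.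
Hypothesis connected : forall u v, connect e u v.
Hypothesis deg_ge : forall v, D <= deg e v.
Let K := t * (2 * q) ^ t.
Hypothesis D_large : degree_bound t q <= D.
Variable xs : T.
Hypotheses (xs_in : xs \in X) (xs_max : deg e xs = maxdeg e X).
Let Delta := maxdeg e X.
Let codeg x := #|nbhd x :&: nbhd xs|.
Let core := [set x in X | (q - 1) * Delta <= q * codeg x].
Let near r := [set x in X | Delta <= r * codeg x].
Let detached := [set y in ~: X | nbhd y :&: core == set0].
Let far_nbrs z y := [set c in nbhd y :\ z | misses q z c].

Lemma q_gt0 : 0 < q.
Proof. exact: leq_trans q_ge8. Qed.

Lemma K_gt0 : 0 < K.
Proof. by rewrite muln_gt0 t_gt0 expn_gt0 muln_gt0 q_gt0. Qed.

Lemma K32_le_D : 32 * K <= D.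
Proof.
have : 32 * K <= 4 * q * K by rewrite leq_mul2r; apply/orP; right; lia.
by move: D_large; rewrite /degree_bound -/K; lia.
Qed.

Lemma qK4_le_D : 4 * (q * K) <= D.
Proof. by apply: leq_trans D_large; rewrite /degree_bound -/K mulnA -addnA leq_addr. Qed.

Lemma deg_gt v : 2 * t * q < deg e v.
Proof. by apply: leq_trans (deg_ge v); move: D_large; rewrite /degree_bound; lia. Qed.

Lemma deg_le_Delta v : v \in X -> deg e v <= Delta.
Proof. by move=> vX; apply: leq_bigmax_cond. Qed.

Lemma Delta_gt0 : 0 < Delta.
Proof. by rewrite /Delta -xs_max (leq_trans _ (deg_gt xs)) // !muln_gt0 t_gt0 q_gt0. Qed.

Lemma xs_core : xs \in core.
Proof. by rewrite inE xs_in /codeg setIid -deg_nbhd xs_max leq_mul2r leq_subr orbT. Qed.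

Lemma core_deg p : p \in core -> (q - 1) * Delta <= q * deg e p.
Proof.
rewrite inE => /andP[_ /leq_trans]; apply; rewrite leq_mul2l deg_nbhd.
by rewrite subset_leq_card ?subsetIl ?orbT.
Qed.

Lemma core_sub_near2 : core \subset near 2.
Proof.
by apply/subsetP => p; rewrite !inE => /andP[-> h]; move: h q_ge8; nia.
Qed.

Lemma card_nbhd_noncore_lt y : y \in nbhd xs -> #|nbhd y :\: core| < K.
Proof.
rewrite in_nbhd => xsy; apply: (card_missing_lt _ no_biclaw xsy).
- exact: q_gt0.
- apply/subsetP => a; rewrite in_setD in_setD1 => /andP[aC ->]; rewrite andbT.
  by apply: contraNneq aC => ->; apply: xs_core.
- exact: deg_gt.
- move=> a; rewrite in_setD in_nbhd => /andP[aC ya].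
  have aX : a \in X by rewrite (bip_side ya) (bip_side xsy) xs_in.
  move: aC; rewrite inE aX -ltnNge /= /misses xs_max -/Delta => aC.
  have := cardsID (nbhd a) (nbhd xs); rewrite setIC -/(codeg a) -deg_nbhd xs_max.
  by move: aC q_ge8; nia.
Qed.

Lemma card_nbhd_xs : #|nbhd xs| = Delta.
Proof. by rewrite -deg_nbhd xs_max. Qed.

Lemma card_near_noncore r : 0 < r -> #|near r :\: core| <= r * (K - 1).
Proof.
move=> r0; set Z := near r :\: core.
have lower : #|Z| * Delta <= r * \sum_(z in Z) codeg z.
  rewrite [r * _]big_distrr -sum_nat_const; apply: leq_sum => z.
  by rewrite !inE => /andP[_ /andP[_ ->]].
have upper : \sum_(b in nbhd xs) #|nbhd b :&: Z| <= Delta * (K - 1).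
  rewrite -card_nbhd_xs -sum_nat_const; apply: leq_sum => b /card_nbhd_noncore_lt.
  have : #|nbhd b :&: Z| <= #|nbhd b :\: core|.
    by apply/subset_leq_card/subsetP => z; rewrite !inE => /andP[-> /andP[->]].
  lia.
rewrite /codeg double_count_nbhd in lower.
have := leq_trans lower (leq_mul (leqnn r) upper).
by rewrite mulnCA mulnC leq_pmul2l ?Delta_gt0.
Qed.

Lemma card_far_nbrs_lt z y : e z y -> #|far_nbrs z y| < K.
Proof.
move=> zy; apply: (card_missing_lt _ no_biclaw zy).
- exact: q_gt0.
- by apply/subsetP => c; rewrite inE => /andP[].
- exact: deg_gt.
- by move=> c; rewrite inE => /andP[].
Qed.

Lemma detached_nonadj_near2 y z : y \in detached -> e y z -> z \notin near 2.
Proof.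
rewrite inE in_setC => /andP[yX /eqP ycore] yz; apply/negP => zZ.
have zX : z \in X by rewrite (bip_side yz) yX.
have cover : nbhd y :\ z \subset far_nbrs z y :|: (near 4 :\: core).
  apply/subsetP => c cy; rewrite in_setU; case: (boolP (c \in far_nbrs z y)) => //= cfar.
  have yc : e y c by move: cy; rewrite in_setD1 in_nbhd => /andP[].
  have cX : c \in X by rewrite (bip_side yc) yX.
  have cC : c \notin core.
    by apply/negP => cC; move/setP/(_ c): ycore; rewrite in_setI in_nbhd yc cC inE.
  rewrite in_setD cC inE cX /=.
  have close : q * #|nbhd z :\: nbhd c| < deg e z.
    by move: cfar; rewrite inE cy /misses -ltnNge.
  have := card_setI_le_setD (nbhd z) (nbhd xs) (nbhd c).
  have := deg_le_Delta zX.
  move: zZ; rewrite inE => /andP[_].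
  by move: close q_ge8; rewrite /codeg; nia.
have := subset_leq_card cover.
have [+ _] := leq_card_setU (far_nbrs z y) (near 4 :\: core).
have := card_far_nbrs_lt (y := y) (z := z); rewrite e_sym yz => /(_ isT).
have := card_near_noncore (isT : 0 < 4).
have := cardsD1 z (nbhd y); rewrite in_nbhd yz -deg_nbhd.
have := deg_ge y; have := K32_le_D; have := K_gt0; lia.
Qed.

Lemma card_nbhd_not_near2_lt y p :
  y \notin X -> e y p -> p \in core -> #|nbhd y :\: near 2| < K.
Proof.
move=> yX yp pC; have pX : p \in X by rewrite (bip_side yp) yX.
have py : e p y by rewrite e_sym.
apply: leq_ltn_trans (card_far_nbrs_lt py); apply/subset_leq_card/subsetP => c.
rewrite in_setD in_nbhd => /andP[cZ yc]; have cX : c \in X by rewrite (bip_side yc) yX.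
have cp : c != p by apply: contraNneq cZ => ->; apply: (subsetP core_sub_near2).
rewrite inE in_setD1 cp in_nbhd yc /misses leqNgt; apply: contra cZ => close.
rewrite inE cX /=; have := card_setI_le_setD (nbhd p) (nbhd xs) (nbhd c).
have := deg_le_Delta pX; move: pC; rewrite inE => /andP[_].
by move: close q_ge8; rewrite /codeg; nia.
Qed.

Lemma nondetached_core_nbr y :
  y \notin X -> y \notin detached -> exists2 p, e y p & p \in core.
Proof.
move=> yX; rewrite inE in_setC yX /= => /set0Pn[p].
by rewrite in_setI in_nbhd => /andP[]; exists p.
Qed.

Lemma card_nbhd_detached_lt a y :
  a \in X -> e a y -> y \notin detached -> #|nbhd a :&: detached| < K.
Proof.
move=> aX ay yD; have yX : y \notin X by rewrite (bip_side ay) aX.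
have [p yp pC] := nondetached_core_nbr yX yD.
have ya : e y a by rewrite e_sym.
apply: (card_missing_lt _ no_biclaw ya).
- exact: q_gt0.
- apply/subsetP => s; rewrite in_setI in_setD1 => /andP[-> sD]; rewrite andbT.
  by apply: contraNneq yD => <-.
- exact: deg_gt.
move=> s; rewrite in_setI => /andP[_ sD].
have : #|nbhd y :&: near 2| <= #|nbhd y :\: nbhd s|.
  apply/subset_leq_card/subsetP => c; rewrite in_setI in_setD => /andP[-> cZ].
  by rewrite andbT in_nbhd; apply: contraL cZ; apply: detached_nonadj_near2.
have := card_nbhd_not_near2_lt yX yp pC; have := cardsID (near 2) (nbhd y).
have := deg_ge y; have := K32_le_D; rewrite /misses deg_nbhd.
by move: q_ge8; nia.
Qed.

Let close_nbrs z y := (nbhd y :\ z) :\: far_nbrs z y.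

Lemma deg_le_card_close_nbrs z y : e z y -> deg e y <= #|close_nbrs z y| + K.
Proof.
move=> zy; rewrite /close_nbrs; have := card_far_nbrs_lt zy.
have := subset_leq_card (subsetIr (nbhd y :\ z) (far_nbrs z y)).
have := cardsID (far_nbrs z y) (nbhd y :\ z).
have := cardsD1 z (nbhd y); rewrite in_nbhd [e y z]e_sym zy -deg_nbhd.
lia.
Qed.

Lemma close_nbrs_codeg z y c :
  c \in close_nbrs z y -> (q - 1) * deg e z < q * #|nbhd c :&: nbhd z|.
Proof.
rewrite in_setD inE => /andP[+ cy]; rewrite cy /misses -ltnNge => close.
have := cardsID (nbhd c) (nbhd z); rewrite setIC -deg_nbhd.
by move: close q_ge8; nia.
Qed.

Lemma card_nbhd_close_lt a y w :
  a \in X -> y \in detached -> e a w -> w \notin detached ->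
  #|nbhd w :&: close_nbrs a y| < K.
Proof.
move=> aX yD aw wD; have wX : w \notin X by rewrite (bip_side aw) aX.
have [p wp pC] := nondetached_core_nbr wX wD.
apply: leq_ltn_trans (card_nbhd_not_near2_lt wX wp pC).
apply/subset_leq_card/subsetP => c; rewrite in_setI [_ \in close_nbrs _ _]in_setD.
rewrite in_setD1 !in_nbhd => /and4P[wc _ _ yc].
by rewrite in_setD in_nbhd wc andbT (detached_nonadj_near2 yD yc).
Qed.

Lemma no_mixed_nbhd a y0 y1 :
  a \in X -> y0 \in detached -> y1 \notin detached -> e a y0 -> e a y1 -> False.
Proof.
(* Count pairs [(c, w)] with [c] in [G] and [w] in [N(a)] adjacent: each [c] sees almost
   all of [N(a)], but fewer than [K] vertices of [N(a)] are detached and each of the others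
   sees fewer than [K] vertices of [G]. *)
move=> aX y0D y1D ay0 ay1; set G := close_nbrs a y0.
have lower : #|G| * ((q - 1) * deg e a) <= q * \sum_(c in G) #|nbhd c :&: nbhd a|.
  rewrite [q * _]big_distrr /= -sum_nat_const; apply: leq_sum => c cG.
  exact/ltnW/(close_nbrs_codeg cG).
have upper : \sum_(w in nbhd a) #|nbhd w :&: G| <= K * #|G| + K * deg e a.
  rewrite (big_setID detached) /=; apply: leq_add.
    apply: (@leq_trans (#|nbhd a :&: detached| * #|G|)).
      by rewrite -sum_nat_const; apply: leq_sum => w _; apply/subset_leq_card/subsetIr.
    by rewrite leq_mul2r ltnW ?orbT // (card_nbhd_detached_lt aX ay1 y1D).
  apply: (@leq_trans (#|nbhd a :\: detached| * K)).
    rewrite -sum_nat_const; apply: leq_sum => w; rewrite in_setD in_nbhd => /andP[wD aw].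
    exact/ltnW/(card_nbhd_close_lt aX y0D aw wD).
  by rewrite mulnC leq_mul2l deg_nbhd subset_leq_card ?subsetDl ?orbT.
rewrite double_count_nbhd in lower.
apply: (weighted_count_contra q_ge8 K_gt0 _ _ (leq_trans lower (leq_mul (leqnn q) upper))).
- exact: leq_trans qK4_le_D (deg_ge a).
- have := deg_le_card_close_nbrs ay0; rewrite -/G.
  by have := deg_ge y0; have := K32_le_D; lia.
Qed.

Lemma exists_core_nbr y : y \notin X -> exists2 p, e y p & p \in core.
Proof.
move=> yX; have [yD|] := boolP (y \in detached); last exact: nondetached_core_nbr.
pose comp v := (v \in detached) || (v \in X) && [exists w, e v w && (w \in detached)].
have comp_edge a b : a \in X -> e a b -> comp a = comp b.
  move=> aX ab; have bX : b \notin X by rewrite (bip_side ab) aX.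
  have aD : a \notin detached by rewrite inE in_setC aX.
  rewrite /comp (negbTE aD) aX (negbTE bX) /= orbF.
  case: (boolP (b \in detached)) => bD; first by apply/existsP; exists b; rewrite ab bD.
  apply/negbTE/existsPn => w; apply/negP => /andP[aw wD].
  exact: (no_mixed_nbhd aX wD bD aw ab).
(* By connectivity [comp] cannot contain [y] without containing [xs]. *)
have comp_closed : closed e comp.
  move=> u v uv; case uX: (u \in X); first exact: comp_edge.
  by symmetry; apply: comp_edge; rewrite 1?e_sym // (bip_side uv) uX.
have : comp y = comp xs := closed_connect comp_closed (connected y xs).
have xsD : xs \notin detached by rewrite inE in_setC xs_in.
rewrite /comp yD (negbTE xsD) xs_in /= => /esym/existsP[w /andP[xsw]].
rewrite inE => /andP[_ /eqP/setP/(_ xs)].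
by rewrite in_setI in_nbhd e_sym xsw xs_core inE.
Qed.

Lemma card_nbhd_low_lt y U :
  y \notin X -> {in U, forall u, q * deg e u + 2 * Delta <= q * Delta} ->
  #|nbhd y :&: U| < K.
Proof.
move=> yX Ulow; have [p yp pC] := exists_core_nbr yX.
have pX : p \in X by rewrite (bip_side yp) yX.
have py : e p y by rewrite e_sym.
have pDelta := deg_le_Delta pX; have pdeg := core_deg pC; have D0 := Delta_gt0.
apply: (card_missing_lt _ no_biclaw py).
- exact: q_gt0.
- apply/subsetP => u; rewrite in_setI => /andP[yu uU].
  rewrite in_setD1 yu andbT; apply: contraTneq (Ulow u uU) => ->.
  by rewrite -ltnNge; move: pdeg; rewrite mulnBl mul1n; lia.
- exact: deg_gt.
- move=> u; rewrite in_setI => /andP[_ uU]; have := Ulow u uU.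
  have /(congr1 (muln q)) := cardsID (nbhd u) (nbhd p).
  have : q * #|nbhd p :&: nbhd u| <= q * deg e u.
    by rewrite leq_mul2l deg_nbhd subset_leq_card ?subsetIr ?orbT.
  rewrite /misses -!deg_nbhd mulnDr; move: pdeg pDelta; rewrite mulnBl mul1n.
  lia.
Qed.

End Core.
End Bipartite.

Lemma bipartite_setC X :
  (forall u v, e u v -> (u \in X) != (v \in X)) ->
  forall u v, e u v -> (u \in ~: X) != (v \in ~: X).
Proof. by move=> e_bip u v /e_bip; rewrite !in_setC; case: (u \in X); case: (v \in X). Qed.

Lemma card_nbhd_Uset_lt (R : realType) (eps : R) X t q D y :
  (forall u v, e u v -> (u \in X) != (v \in X)) ->
  0 < t -> 8 <= q -> (2%:R <= q%:R * eps)%R -> ~ has_induced_biclaw e t t ->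
  (forall u v, connect e u v) -> (forall v, D <= deg e v) -> degree_bound t q <= D ->
  y \notin X -> #|nbhd y :&: Uset e X eps| < t * (2 * q) ^ t.
Proof.
move=> e_bip t0 q8 q_eps nob conn degD hD yX.
have [X0|[x0 x0X]] := set_0Vmem X.
  have -> : Uset e X eps = set0 by apply/setP => v; rewrite !inE X0 inE.
  by rewrite setI0 cards0 muln_gt0 t0 expn_gt0 muln_gt0 (leq_trans _ q8).
have [|xs xsX xsmax] := eq_bigmax_cond (deg e) (A := mem X).
  by apply/card_gt0P; exists x0.
apply: (card_nbhd_low_lt e_bip t0 q8 nob conn degD hD xsX (esym xsmax) yX).
by move=> u; rewrite inE => /andP[_]; apply: scaled_low_deg.
Qed.

Lemma Uset_private_nbr_pairs (R : realType) (eps : R) X t q :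
  (forall u v, e u v -> (u \in X) != (v \in X)) ->
  0 < t -> 8 <= q -> (2%:R <= q%:R * eps)%R -> ~ has_induced_biclaw e t t ->
  (forall u v, connect e u v) -> (forall v, 3 * degree_bound t q <= deg e v) ->
  private_nbr_pairs (Uset e X eps) ((~: X) :\: Uset e (~: X) eps).
Proof.
move=> e_bip t0 q8 q_eps nob conn degD.
have hD : degree_bound t q <= 3 * degree_bound t q by rewrite leq_pmull.
have lowX := card_nbhd_Uset_lt e_bip t0 q8 q_eps nob conn degD hD.
have lowY := card_nbhd_Uset_lt (bipartite_setC e_bip) t0 q8 q_eps nob conn degD hD.
set K := t * (2 * q) ^ t in lowX lowY.
have K_gt1 : 1 < K.
  have : (2 * q) ^ 1 <= (2 * q) ^ t by apply: leq_pexp2l; lia.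
  by rewrite expn1 /K; move: t0 q8; nia.
have [U0|[z0 z0U]] := set_0Vmem (Uset e X eps).
  rewrite /private_nbr_pairs U0; exists id, id.
  by split; last split; last split; move=> u; rewrite inE.
apply: (double_matching (M := K - 1) z0); first by rewrite subn_gt0.
  move=> u; rewrite inE => /andP[uX _].
  have := lowY u; rewrite inE uX => /(_ isT).
  have := cardsID (Uset e (~: X) eps) (nbhd u).
  have : nbhd u :\: Uset e (~: X) eps \subset nbhd u :&: ((~: X) :\: Uset e (~: X) eps).
    apply/subsetP => y /setDP[uy yU]; rewrite in_setI uy in_setD yU in_setC.
    by move: uy; rewrite in_nbhd => /(bip_side e_bip)->; rewrite uX.
  move/subset_leq_card; have := degD u; rewrite deg_nbhd /degree_bound -/K.
  by move: K_gt1 q8; nia.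
move=> y; rewrite in_setD in_setC => /andP[_ yX].
by rewrite subn1 -ltnS prednK ?lowX // ltnW.
Qed.

End Graph.

Local Open Scope ring_scope.

(* Any integer [q >= 8] with [q eps >= 2] would do. *)
Definition eps_scale (R : realType) (eps : R) : nat := ((Num.truncn (2 / eps)).+1 + 8)%N.

Lemma eps_scale_mul_ge2 (R : realType) (eps : R) : 0 < eps -> 2%:R <= (eps_scale eps)%:R * eps.
Proof.
move=> eps0; have le2 : 2 / eps <= (eps_scale eps)%:R.
  by apply/ltW/(lt_le_trans (truncnS_gt _)); rewrite ler_nat leq_addr.
by rewrite -[2%:R](divfK (lt0r_neq0 eps0)) ler_wpM2r // ltW.
Qed.

Unset Implicit Arguments.

Theorem mainTheorem15 (R : realType) :
  exists C : nat -> R -> R,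
  forall (t : nat) (eps : R), (0 < t)%N -> 0 < eps < 1 ->
  forall (T : finType) (e : rel T) (X : {set T}) (n : nat),
    symmetric e ->
    (forall u v, e u v -> (u \in X) != (v \in X)) ->
    #|X| = n -> #|~: X| = n ->
    (forall u v, connect e u v) ->
    (forall v, 3 * C t eps <= (deg e v)%:R) ->
    ~ has_induced_biclaw e t t ->
    (exists fm fp : T -> T,
       (forall u, u \in Uset e X eps ->
          [/\ fm u \in (~: X) :\: Uset e (~: X) eps,
              fp u \in (~: X) :\: Uset e (~: X) eps,
              e u (fm u) & e u (fp u)]) /\
       {in Uset e X eps &, injective fm} /\
       {in Uset e X eps &, injective fp} /\
       (forall u u', u \in Uset e X eps -> u' \in Uset e X eps -> fm u != fp u'))
    /\
    (exists fm fp : T -> T,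
       (forall v, v \in Uset e (~: X) eps ->
          [/\ fm v \in X :\: Uset e X eps,
              fp v \in X :\: Uset e X eps,
              e v (fm v) & e v (fp v)]) /\
       {in Uset e (~: X) eps &, injective fm} /\
       {in Uset e (~: X) eps &, injective fp} /\
       (forall v v', v \in Uset e (~: X) eps -> v' \in Uset e (~: X) eps -> fm v != fp v')).
Proof.
exists (fun t eps => (degree_bound t (eps_scale eps))%:R).
move=> t eps t_gt0 /andP[eps_gt0 _] T e X n e_sym e_bip _ _ connected deg_ge no_biclaw.
have q_ge8 : (8 <= eps_scale eps)%N by apply: leq_addl.
have degD v : (3 * degree_bound t (eps_scale eps) <= deg e v)%N.
  by rewrite -(ler_nat R) natrM; apply: deg_ge.
have pairs (Z : {set T}) : (forall u v, e u v -> (u \in Z) != (v \in Z)) ->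
    private_nbr_pairs e (Uset e Z eps) ((~: Z) :\: Uset e (~: Z) eps).
  move=> Z_bip; apply: (Uset_private_nbr_pairs e_sym Z_bip t_gt0 q_ge8) => //.
  exact: eps_scale_mul_ge2.
split; first exact: pairs e_bip.
by have := pairs _ (bipartite_setC e_bip); rewrite setCK.
Qed.
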